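(* Let $X$ be an infinite-dimensional Banach space over $\mathbb{K}\in\{\mathbb{R},\mathbb{C}\}$, let $\varepsilon>0$, $n\in\mathbb{N}$, and $\varphi_1,\dots,\varphi_n\in X^*\setminus\{0\}$, and put $A=\{x\in X: |\varphi_i(x)|<\varepsilon\text{ for all }i=1,\dots,n\}$. Then: (i) $\dim\big(\bigcap_{i=1}^n\ker\varphi_i\big)=\dim X$, and every linear subspace $W\subset A$ with $\dim W<\dim X$ satisfies $W\subset\bigcap_{i=1}^n\ker\varphi_i$; consequently, for every cardinal $\alpha<\dim X$, $A$ is $(\alpha,\dim X)$-spaceable (with respect to the norm topology). (ii) There exists $x\in A$ such that no linear subspace $W$ of $X$ satisfies $x\in W\subset A\cup\{0\}$; in particular $A$ is not pointwise lineable (hence not pointwise spaceable).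
   Context: $X^*$ denotes the topological dual of $X$; $\dim$ denotes algebraic (Hamel) dimension. For a vector space $V$ and a cardinal $\alpha$, a subset $A\subset V$ is $\alpha$-lineable if $A\cup\{0\}$ contains a linear subspace of dimension $\alpha$. For cardinals $\alpha<\beta\le\dim V$, $A$ is $(\alpha,\beta)$-spaceable if $A$ is $\alpha$-lineable and for every linear subspace $W_\alpha\subset A\cup\{0\}$ with $\dim W_\alpha=\alpha$ there is a closed linear subspace $W_\beta$ with $\dim W_\beta=\beta$ and $W_\alpha\subset W_\beta\subset A\cup\{0\}$. $A$ is pointwise lineable if for each $x\in A$ there is an infinite-dimensional linear subspace $W_x$ with $x\in W_x\subset A\cup\{0\}$; pointwise spaceable is the same with $W_x$ required to be closed. *)

From mathcomp Require Import all_boot all_order all_algebra.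
From mathcomp Require Import all_classical all_reals all_analysis.
From mathcomp Require Export complex.
Export numFieldNormedType.Exports.
Set Implicit Arguments.
Unset Strict Implicit.
Unset Printing Implicit Defensive.
Import Order.TTheory GRing.Theory Num.Theory.
Local Open Scope classical_set_scope.
Local Open Scope ring_scope.

Section LinAlg.
Context {K : numFieldType} {V : lmodType K}.

Definition lsubspace (W : set V) : Prop :=
  W 0 /\ forall (a : K) (x y : V), W x -> W y -> W (a *: x + y).

Definition lspan (B : set V) : set V :=
  [set x | exists (s : seq V) (c : V -> K),
     (forall v, v \in s -> B v) /\ x = \sum_(v <- s) c v *: v].

Definition lin_indep (B : set V) : Prop :=
  forall (s : seq V) (c : V -> K), uniq s -> (forall v, v \in s -> B v) ->
    \sum_(v <- s) c v *: v = 0 -> forall v, v \in s -> c v = 0.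

Definition hamel_basis (W B : set V) : Prop :=
  B `<=` W /\ lin_indep B /\ lspan B = W.

Definition dim_is (W : set V) {T : Type} (S : set T) : Prop :=
  exists B, hamel_basis W B /\ (B #= S)%card.

Definition dim_eq (W W' : set V) : Prop :=
  exists B B', hamel_basis W B /\ hamel_basis W' B' /\ (B #= B')%card.

Definition dim_lt (W W' : set V) : Prop :=
  exists B B', hamel_basis W B /\ hamel_basis W' B' /\
    (B #<= B')%card /\ ~ (B' #<= B)%card.

Definition finite_dim (W : set V) : Prop :=
  exists s : seq V, lspan [set v | v \in s] = W.

Definition infinite_dim (W : set V) : Prop := ~ finite_dim W.

(* A is alpha-lineable, alpha = |S| *)
Definition lineable (A : set V) {T : Type} (S : set T) : Prop :=
  exists W, lsubspace W /\ W `<=` A `|` [set 0] /\ dim_is W S.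

Definition pointwise_lineable (A : set V) : Prop :=
  forall x, A x -> exists W, lsubspace W /\ infinite_dim W /\ W x /\
    W `<=` A `|` [set 0].
End LinAlg.

Section Top.
Context {K : numFieldType} {V : normedModType K}.

(* (alpha, beta)-spaceable with alpha = |S|, beta = |S'| *)
Definition spaceable (A : set V) {T T' : Type} (S : set T) (S' : set T') : Prop :=
  lineable A S /\
  forall W, lsubspace W -> W `<=` A `|` [set 0] -> dim_is W S ->
    exists W', lsubspace W' /\ closed W' /\ dim_is W' S' /\
      W `<=` W' /\ W' `<=` A `|` [set 0].

Definition pointwise_spaceable (A : set V) : Prop :=
  forall x, A x -> exists W, lsubspace W /\ closed W /\ infinite_dim W /\ W x /\
    W `<=` A `|` [set 0].
End Top.

Definition is_dual {K : numFieldType} {X : normedModType K} (f : X -> K^o) : Prop :=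
  (forall (a : K) (x y : X), f (a *: x + y) = a * f x + f y) /\ continuous f.

Definition thm4_stmt (K : numFieldType) (X : completeNormedModType K) : Prop :=
  infinite_dim [set: X] ->
  forall (eps : K) (n : nat) (phi : 'I_n -> X -> K^o),
    0 < eps -> (0 < n)%N ->
    (forall i, is_dual (phi i)) ->
    (forall i, phi i <> (fun _ => 0)) ->
    let A : set X := [set x | forall i, `|phi i x| < eps] in
    let Ker : set X := [set x | forall i, phi i x = 0] in
    (dim_eq Ker [set: X] /\
     (forall W : set X, lsubspace W -> W `<=` A -> dim_lt W [set: X] -> W `<=` Ker) /\
     (forall (T : Type) (S : set T) (BX : set X),
        hamel_basis [set: X] BX -> (S #<= BX)%card -> ~ (BX #<= S)%card ->
        spaceable A S BX))
    /\
    ((exists x, A x /\ forall W : set X, lsubspace W -> W x -> ~ (W `<=` A `|` [set 0])) /\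
     ~ pointwise_lineable A /\ ~ pointwise_spaceable A).

From HB Require Import structures.
From mathcomp Require Import all_boot all_order all_algebra.
From mathcomp Require Import all_classical all_reals all_analysis.
From mathcomp Require Import complex.

(* The proof rests on two facts.
   - A linear subspace [W] contained in [A \cup {0}] lies in [Ker]: each
     [phi_i] is bounded by [eps] on [W], and a vector of [W] with
     [phi_i w <> 0] could be rescaled to reach the level [eps].
   - For every Hamel basis [BX] of [X], [Ker] has a Hamel basis equipotent to
     [BX]: pick finitely many [s] in [BX] whose images under
     [Phi = (phi_1, ..., phi_n) : X -> K^n] form a basis of [Phi(X)]; the
     projection onto [Ker] along [span s] maps [BX \ s] injectively onto a
     basis of [Ker], and removing finitely many points from the infinite set
     [BX] does not change its cardinal.
   Part (i) follows: [Ker] is closed, has dimension [dim X] and contains every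
   subspace of [A \cup {0}], so it is the required closed subspace; smaller
   subspaces are spans of parts of its basis.  Part (ii): a point of [A] off
   [Ker] lies in no linear subspace inside [A \cup {0}]. *)

Set Implicit Arguments.
Unset Strict Implicit.
Unset Printing Implicit Defensive.
Import Order.TTheory GRing.Theory Num.Theory.
Import numFieldNormedType.Exports.
Local Open Scope classical_set_scope.
Local Open Scope ring_scope.

Section Subspaces.
Context {K : numFieldType} {V : lmodType K}.
Implicit Types (B W : set V).

Lemma subspaceD W x y : lsubspace W -> W x -> W y -> W (x + y).
Proof. by move=> [_ WL] Wx Wy; have := WL 1 x y Wx Wy; rewrite scale1r. Qed.

Lemma subspaceZ W a x : lsubspace W -> W x -> W (a *: x).
Proof. by move=> [W0 WL] Wx; have := WL a x 0 Wx W0; rewrite addr0. Qed.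

Lemma subspace_sum W (I : eqType) (s : seq I) (F : I -> V) :
  lsubspace W -> (forall i, i \in s -> W (F i)) -> W (\sum_(i <- s) F i).
Proof.
move=> WS; elim: s => [|a s IH] Hs; first by rewrite big_nil; case: WS.
rewrite big_cons; apply: subspaceD => //; first by apply: Hs; rewrite inE eqxx.
by apply: IH => i si; apply: Hs; rewrite inE si orbT.
Qed.

Lemma scale_sum_undup (s : seq V) (c : V -> K) :
  \sum_(v <- s) c v *: v = \sum_(v <- undup s) (c v *+ count_mem v s) *: v.
Proof.
rewrite -big_undup_iterop_count; apply: eq_bigr => v _.
rewrite -scalerMnl Monoid.iteropE; elim: (count_mem v s) => [|k IH] //=.
by rewrite IH mulrS.
Qed.

Lemma scale_sum_extend (s t : seq V) (c : V -> K) :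
  uniq s -> uniq t -> {subset s <= t} ->
  \sum_(v <- s) c v *: v = \sum_(v <- t) (if v \in s then c v else 0) *: v.
Proof.
move=> us ut st.
have -> : \sum_(v <- t) (if v \in s then c v else 0) *: v =
          \sum_(v <- t | v \in s) c v *: v.
  by rewrite [RHS]big_mkcond; apply: eq_bigr => v _; case: ifP; rewrite ?scale0r.
rewrite -[RHS]big_filter; apply: perm_big; apply: uniq_perm => //.
  exact: filter_uniq.
by move=> v; rewrite mem_filter; case vs: (v \in s) => //=; rewrite st.
Qed.

Lemma lspan_uniqP B x : lspan B x ->
  exists (s : seq V) (c : V -> K), [/\ uniq s, forall v, v \in s -> B v &
    x = \sum_(v <- s) c v *: v].
Proof.
move=> [s [c [sB ->]]]; exists (undup s), (fun v => c v *+ count_mem v s).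
split; [exact: undup_uniq | | exact: scale_sum_undup].
by move=> v; rewrite mem_undup; apply: sB.
Qed.

Lemma lspan_subspace B : lsubspace (lspan B).
Proof.
split; first by exists [::], (fun _ => 0); rewrite big_nil.
move=> a x y /lspan_uniqP[s1 [c1 [u1 sB1 ->]]] /lspan_uniqP[s2 [c2 [u2 sB2 ->]]].
have ut := undup_uniq (s1 ++ s2).
exists (undup (s1 ++ s2)),
  (fun v => a * (if v \in s1 then c1 v else 0) + (if v \in s2 then c2 v else 0)).
split; first by move=> v; rewrite mem_undup mem_cat => /orP[/sB1|/sB2].
rewrite (scale_sum_extend c1 u1 ut); last first.
  by move=> v vs; rewrite mem_undup mem_cat vs.
rewrite (scale_sum_extend c2 u2 ut); last first.
  by move=> v vs; rewrite mem_undup mem_cat vs orbT.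
rewrite scaler_sumr -big_split /=; apply: eq_bigr => v _.
by rewrite scalerDl scalerA.
Qed.

Lemma sub_lspan B : B `<=` lspan B.
Proof.
move=> v Bv; exists [:: v], (fun _ => 1); split; last first.
  by rewrite big_cons big_nil addr0 scale1r.
by move=> w; rewrite inE => /eqP ->.
Qed.

Lemma lspan_min B W : lsubspace W -> B `<=` W -> lspan B `<=` W.
Proof.
move=> WS BW x [s [c [sB ->]]]; apply: subspace_sum => // v vs.
by apply: subspaceZ => //; apply/BW/sB.
Qed.

Lemma lin_indep_sub B B' : B' `<=` B -> lin_indep B -> lin_indep B'.
Proof. by move=> B'B indB s c us sB'; apply: indB => // v /sB' /B'B. Qed.

Lemma lin_indep_extend B x :
  lin_indep B -> ~ lspan B x -> lin_indep (B `|` [set x]).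
Proof.
move=> indB nx s c us sBx sum0.
have sB v : v \in s -> v != x -> B v.
  by move=> vs vx; case: (sBx v vs) => // /= vxE; rewrite vxE eqxx in vx.
have cx0 : x \in s -> c x = 0.
  move=> xs; apply: contrapT => /eqP cx; apply: nx.
  move: sum0; rewrite (bigD1_seq x) //= => /eqP; rewrite addr_eq0 => /eqP cxE.
  have -> : x = - (c x)^-1 *: \sum_(v <- s | v != x) c v *: v.
    by rewrite scaleNr -scalerN -cxE scalerA mulVf // scale1r.
  apply: subspaceZ; first exact: lspan_subspace.
  rewrite -big_filter; apply: subspace_sum; first exact: lspan_subspace.
  move=> v; rewrite mem_filter => /andP[vx vs].
  by apply: subspaceZ; [exact: lspan_subspace | exact/sub_lspan/sB].
have sum0' : \sum_(v <- [seq v <- s | v != x]) c v *: v = 0.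
  rewrite big_filter -[RHS]sum0 [RHS](bigID (pred1 x)) /=.
  rewrite [X in _ = X + _]big1_seq ?add0r // => v /andP[/eqP -> xs].
  by rewrite cx0 ?scale0r.
move=> v vs; have [vxE|vx] := eqVneq v x; first by rewrite vxE cx0 -?vxE.
apply: (indB _ c (filter_uniq _ us) _ sum0'); last by rewrite mem_filter vx.
by move=> w; rewrite mem_filter => /andP[wx ws]; apply: sB.
Qed.

Lemma seq_in_chain (F : set (set V)) (s : seq V) :
  total_on F subset -> (forall v, v \in s -> (\bigcup_(Y in F) Y) v) ->
  s = [::] \/ exists2 Y, F Y & forall v, v \in s -> Y v.
Proof.
move=> tot; elim: s => [|x s IH] Hs; first by left.
right; have [Y1 FY1 Y1x] := Hs x (mem_head _ _).
have [->|[Y2 FY2 HY2]] := IH (fun v vs => Hs v (@mem_behead _ (x :: s) v vs)).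
  by exists Y1 => // v; rewrite inE => /eqP ->.
have [S12|S21] := tot _ _ FY1 FY2.
  by exists Y2 => // v; rewrite inE => /orP[/eqP ->|/HY2]; [exact: S12|].
by exists Y1 => // v; rewrite inE => /orP[/eqP ->|/HY2/S21].
Qed.

Lemma exists_hamel_basis : exists B : set V, hamel_basis [set: V] B.
Proof.
have [B [indB maxB]] : exists B : set V, lin_indep B /\
    forall B', B `<` B' -> ~ lin_indep B'.
  apply: Zorn_bigcup => F Findep tot s c us sF.
  have [->|[Y FY HY]] := seq_in_chain tot sF; first by [].
  exact: (Findep Y FY s c us HY).
exists B; split => //; split => //; apply/seteqP; split => // x _.
apply: contrapT => nx; apply: (maxB (B `|` [set x])); last exact: lin_indep_extend.
split; first by move=> v Bv; left.
by move=> BxB; apply/nx/sub_lspan/(BxB x); right.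
Qed.

End Subspaces.

Section Cardinals.
Local Open Scope card_scope.

(* The
   points of a copy [e] of nat inside [A \ x] are shifted by one, and [x] is
   sent to [e 0]. ([x] makes [T] a pointed type, as injections into [T] are
   taken with a default value.) *)
Lemma card_le_setD1 (T : choiceType) (A : set T) (x : T) :
  infinite_set A -> A #<= A `\ x.
Proof.
move=> Ainf.
pose Tp : pointedType := HB.pack_for pointedType T (isPointed.Build T x).
have /infiniteP /(@pcard_leP _ Tp) [e'] := infinite_setD Ainf (finite_set1 x).
have [e efun einj] : exists2 e : nat -> T, set_fun [set: nat] (A `\ x) e &
     set_inj [set: nat] e by apply/injfunPex; squash e'.
have eI k l : e k = e l -> k = l by move=> /einj; apply; rewrite in_setE.
pose h (a : T) := if pselect (a = x) is left _ then e 0%N else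
  if pselect (exists k, e k = a) is left H then e (projT1 (cid H)).+1 else a.
apply/(@pcard_leP _ Tp)/injfunPex; exists h.
  move=> a Aa; rewrite /h; case: pselect => [_|ax]; first exact: efun.
  by case: pselect => [H|_]; [exact: efun | split].
move=> a b Aa Ab; rewrite /h.
case: (pselect (a = x)) => [->|ax]; case: (pselect (b = x)) => [->|bx] //.
- case: (pselect (exists k, e k = b)) => [H|nH]; first by move=> /eI.
  by move=> e0b; exfalso; apply: nH; exists 0%N.
- case: (pselect (exists k, e k = a)) => [H|nH]; first by move=> /eI.
  by move=> e0a; exfalso; apply: nH; exists 0%N.
case: (pselect (exists k, e k = a)) => [H1|nH];
  case: (pselect (exists k, e k = b)) => [H2|nH'] //.
- by case: cid => /= k <-; case: cid => /= l <- /eI[->].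
- by case: cid => /= k <- ekb; exfalso; apply: nH'; exists k.+1.
- by case: cid => /= l <- eal; exfalso; apply: nH; exists l.+1.
Qed.

Lemma card_setD_seq (T : choiceType) (A : set T) (s : seq T) :
  infinite_set A -> A `\` [set` s] #= A.
Proof.
move=> Ainf; rewrite card_eq_le card_le_setD /=.
elim: s => [|x s IH]; first by apply: subset_card_le => a Aa; split.
apply: (card_le_trans IH).
have -> : A `\` [set` (x :: s)] = (A `\` [set` s]) `\ x.
  apply/seteqP; split => a /=; rewrite inE.
    by move=> [Aa /negP]; rewrite negb_or => /andP[/eqP ? /negP ?].
  move=> [[Aa sa] /eqP xa]; split => //.
  by apply/negP; rewrite negb_or xa /=; apply/negP.
exact/card_le_setD1/infinite_setD.
Qed.

End Cardinals.

Definition linmap {K : numFieldType} {U W : lmodType K} (f : U -> W) : Prop :=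
  forall a x y, f (a *: x + y) = a *: f x + f y.

Section LinearMaps.
Context {K : numFieldType} {U W : lmodType K} {f : U -> W} (f_lin : linmap f).

Lemma linmap0 : f 0 = 0.
Proof.
have := f_lin 1 0 0; rewrite !scale1r addr0 => f0.
by apply: (addrI (f 0)); rewrite addr0 -f0.
Qed.

Lemma linmapD x y : f (x + y) = f x + f y.
Proof. by have := f_lin 1 x y; rewrite !scale1r. Qed.

Lemma linmapZ a x : f (a *: x) = a *: f x.
Proof. by have := f_lin a x 0; rewrite !addr0 linmap0 addr0. Qed.

Lemma linmapB x y : f (x - y) = f x - f y.
Proof. by rewrite linmapD -scaleN1r linmapZ scaleN1r. Qed.

Lemma linmap_sum (I : Type) (s : seq I) (F : I -> U) :
  f (\sum_(i <- s) F i) = \sum_(i <- s) f (F i).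
Proof.
elim: s => [|a s IH]; first by rewrite !big_nil linmap0.
by rewrite !big_cons linmapD IH.
Qed.

End LinearMaps.

Section KernelBasis.
Context {K : numFieldType} {V : lmodType K} (n : nat) (phi : 'I_n -> V -> K).
Hypothesis phi_lin : forall i a x y, phi i (a *: x + y) = a * phi i x + phi i y.

Definition Phi (x : V) : 'rV[K]_n := \row_i phi i x.
Let Ker : set V := [set x | forall i, phi i x = 0].

Lemma Phi_lin : linmap Phi.
Proof. by move=> a x y; apply/rowP => i; rewrite !mxE phi_lin. Qed.

Lemma KerP x : Ker x <-> Phi x = 0.
Proof.
split => [Kx|Px i]; first by apply/rowP => i; rewrite !mxE Kx.
by have := congr1 (fun M : 'rV[K]_n => M 0 i) Px; rewrite !mxE.
Qed.

Lemma ker_subspace : lsubspace Ker.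
Proof.
split; first exact/KerP/(linmap0 Phi_lin).
by move=> a x y /KerP Kx /KerP Ky; apply/KerP; rewrite Phi_lin Kx Ky scaler0 addr0.
Qed.

Variable BX : set V.

(* Since [K^n] is finite dimensional, finitely many vectors of [BX] have free
   images under [Phi] spanning the images of all of [BX]: take a free family of
   maximal length. *)
Lemma exists_image_basis : exists s : seq V, [/\ forall v, v \in s -> BX v,
  free (map Phi s) & forall b, BX b -> Phi b \in <<map Phi s>>%VS].
Proof.
pose P m := `[< exists s : seq V,
  [/\ size s = m, forall v, v \in s -> BX v & free (map Phi s)] >].
have P0 : exists m, P m by exists 0%N; apply/asboolP; exists [::]; rewrite nil_free.
have Pn m : P m -> (m <= 1 * n)%N.
  move=> /asboolP[s [<- _ /eqP fs]]; rewrite -(size_map Phi) -fs.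
  by apply: (leq_trans (dimvS (subvf _))); rewrite dimvf dim_matrix.
case: (ex_maxnP P0 Pn) => m /asboolP[s [sm sB fs]] maxm.
exists s; split => // b Bb; apply: contrapT => /negP nb.
suff /maxm : P (size (b :: s)) by rewrite /= sm ltnn.
apply/asboolP; exists (b :: s); split => //.
  by move=> v; rewrite inE => /orP[/eqP ->|/sB].
by rewrite map_cons free_cons nb fs.
Qed.

Hypothesis BXb : hamel_basis [set: V] BX.
Variable s : seq V.
Hypothesis sB : forall v, v \in s -> BX v.
Hypothesis fs : free (map Phi s).
Hypothesis spanP : forall b, BX b -> Phi b \in <<map Phi s>>%VS.

Let m := size (map Phi s).
Let Ts : m.-tuple 'rV[K]_n := in_tuple (map Phi s).

Definition coef (k : nat) (w : 'rV[K]_n) : K :=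
  if (insub k : option 'I_m) is Some i then coord Ts i w else 0.

Lemma coef_lin k : linmap (coef k : 'rV[K]_n -> K^o).
Proof.
move=> a x y; rewrite /coef; case: insub => [i|]; last by rewrite scaler0 addr0.
by rewrite linearD linearZ.
Qed.

Lemma coef_ord (i : 'I_m) w : coef i w = coord Ts i w.
Proof. by rewrite /coef; case: insubP => [j _ /val_inj -> //|]; rewrite ltn_ord. Qed.

(* [projS] projects onto the span of [s] along [Ker], and [projK = id - projS]
   projects onto [Ker]. *)
Definition projS (x : V) : V := \sum_(v <- s) coef (index v s) (Phi x) *: v.
Definition projK (x : V) : V := x - projS x.

Lemma s_uniq : uniq s.
Proof. exact: map_uniq (free_uniq fs). Qed.

Lemma Phi_in_span x : Phi x \in <<map Phi s>>%VS.
Proof.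
have : lspan BX x by rewrite (proj2 (proj2 BXb)).
move=> [t [c [tB ->]]]; rewrite (linmap_sum Phi_lin) big_seq.
by apply: memv_suml => v vt; rewrite (linmapZ Phi_lin); exact/memvZ/spanP/tB.
Qed.

Lemma projS_ord x : projS x = \sum_(i < m) coef i (Phi x) *: s`_i.
Proof.
rewrite /projS (big_nth 0) /m size_map big_mkord; apply: eq_bigr => i _.
by rewrite index_uniq ?s_uniq // -(size_map Phi).
Qed.

Lemma Phi_projS x : Phi (projS x) = Phi x.
Proof.
rewrite projS_ord (linmap_sum Phi_lin) [RHS](@coord_span _ _ _ Ts _ (Phi_in_span x)).
apply: eq_bigr => i _; rewrite (linmapZ Phi_lin) coef_ord /= (nth_map 0) //.
by rewrite -(size_map Phi).
Qed.

Lemma projS_lin : linmap projS.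
Proof.
move=> a x y; rewrite /projS scaler_sumr -big_split /=; apply: eq_bigr => v _.
by rewrite Phi_lin (coef_lin _ a) scalerDl scalerA.
Qed.

Lemma projS_s v : v \in s -> projS v = v.
Proof.
move=> vs; have vi : (index v s < m)%N by rewrite /m size_map index_mem.
have Tsj (i : 'I_m) : Ts`_i = Phi s`_i by rewrite (nth_map 0) // -(size_map Phi).
pose j := Ordinal vi; have -> : v = s`_j by rewrite /= nth_index.
rewrite projS_ord -Tsj (bigD1 j) // coef_ord coord_free // eqxx scale1r.
rewrite big1 /= ?addr0 // => i ij.
by rewrite coef_ord (coord_free j) // eq_sym (negbTE ij) scale0r.
Qed.

Lemma projK_lin : linmap projK.
Proof.
move=> a x y; rewrite /projK projS_lin scalerBr.
by rewrite opprD addrACA.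
Qed.

Lemma projK_ker x : Ker (projK x).
Proof. by apply/KerP; rewrite /projK (linmapB Phi_lin) Phi_projS subrr. Qed.

Lemma projK_id x : Ker x -> projK x = x.
Proof.
move=> /KerP Px; rewrite /projK /projS Px big1 ?subr0 // => v _.
by rewrite (linmap0 (coef_lin _)) scale0r.
Qed.

Lemma projK_s v : v \in s -> projK v = 0.
Proof. by move=> vs; rewrite /projK projS_s // subrr. Qed.

(* The key independence fact: a combination of vectors of [BX] outside [s]
   killed by [projK] lies in the span of [s], hence is trivial. *)
Lemma projK_free (t : seq V) (e : V -> K) : uniq t ->
  (forall v, v \in t -> BX v) -> (forall v, v \in t -> v \notin s) ->
  projK (\sum_(v <- t) e v *: v) = 0 -> forall v, v \in t -> e v = 0.
Proof.
move=> ut tB ts; set y := \sum_(v <- t) e v *: v => Qy.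
pose d v := if v \in s then - coef (index v s) (Phi y) else e v.
have d_t : \sum_(v <- t) d v *: v = y.
  rewrite /y big_seq [RHS]big_seq; apply: eq_bigr => v vt.
  by rewrite /d (negbTE (ts v vt)).
have d_s : \sum_(v <- s) d v *: v = - projS y.
  rewrite /projS -sumrN big_seq [RHS]big_seq; apply: eq_bigr => v vs.
  by rewrite /d vs scaleNr.
have uts : uniq (t ++ s).
  rewrite cat_uniq ut s_uniq andbT; apply/hasPn => v vs; apply/negP => vt.
  by move: (ts v vt); rewrite vs.
move=> v vt; have := proj1 (proj2 BXb) _ d uts _ _ v.
rewrite mem_cat vt /d (negbTE (ts v vt)); apply => //.
  by move=> w; rewrite mem_cat => /orP[/tB|/sB].
by rewrite big_cat /= d_t d_s.
Qed.

Lemma projK_inj : {in BX `\` [set` s] &, injective projK}.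
Proof.
move=> a b; rewrite !in_setE => -[Ba sa] [Bb sb] Qab; apply: contrapT => /eqP ab.
pose e v : K := if v == a then 1 else -1.
have /(_ a) : forall v, v \in [:: a; b] -> e v = 0.
  apply: projK_free.
  - by rewrite /= inE ab.
  - by move=> v; rewrite !inE => /orP[] /eqP ->.
  - by move=> v; rewrite !inE => /orP[] /eqP ->; apply/negP.
  rewrite !big_cons big_nil addr0 /e eqxx eq_sym (negbTE ab) scale1r scaleN1r.
  by rewrite (linmapB projK_lin) Qab subrr.
by rewrite mem_head /e eqxx => /(_ isT) /eqP; rewrite oner_eq0.
Qed.

Definition ker_basis : set V := projK @` (BX `\` [set` s]).

(* Independence comes from [projK_free]: choose preimages in [BX \ s]. *)
Lemma ker_basis_indep : lin_indep ker_basis.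
Proof.
move=> t c ut tB sum0.
have /choice[g gP] : forall w, exists b, ker_basis w ->
    [/\ BX b, b \notin s & projK b = w].
  move=> w; case: (pselect (ker_basis w)) => [[b [Bb sb] <-]|nw]; last by exists w.
  by exists b => _; split => //; apply/negP.
have gK w : w \in t -> projK (g w) = w by move=> wt; case: (gP w (tB _ wt)).
have gi : {in t &, injective g}.
  by move=> w1 w2 w1t w2t gw; rewrite -(gK w1) // gw gK.
move=> w wt; rewrite -(gK w wt).
apply: (@projK_free (map g t) (fun v => c (projK v))); last exact: map_f.
- by rewrite map_inj_in_uniq.
- by move=> v /mapP[w' w't ->]; case: (gP w' (tB _ w't)).
- by move=> v /mapP[w' w't ->]; case: (gP w' (tB _ w't)).
rewrite (linmap_sum projK_lin) big_map -[RHS]sum0 big_seq [RHS]big_seq.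
by apply: eq_bigr => v vt; rewrite (linmapZ projK_lin) gK.
Qed.

(* Spanning: [projK] fixes [Ker] and sends [BX] into [ker_basis \cup {0}]. *)
Lemma ker_basis_span : lspan ker_basis = Ker.
Proof.
apply/seteqP; split.
  by apply: lspan_min; [exact: ker_subspace | move=> _ [b _ <-]; exact: projK_ker].
move=> x Kx; have : lspan BX x by rewrite (proj2 (proj2 BXb)).
move=> [t [c [tB xE]]].
rewrite -(projK_id Kx) xE (linmap_sum projK_lin).
apply: subspace_sum => [|v vt]; first exact: lspan_subspace.
rewrite (linmapZ projK_lin); apply: subspaceZ; first exact: lspan_subspace.
case vs: (v \in s); first by rewrite projK_s //; case: (lspan_subspace ker_basis).
by apply: sub_lspan; exists v => //; split; [exact: tB | rewrite /= vs].
Qed.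

Lemma ker_basis_hamel : hamel_basis Ker ker_basis.
Proof.
split; last by split; [exact: ker_basis_indep | exact: ker_basis_span].
by move=> _ [b _ <-]; exact: projK_ker.
Qed.

(* [ker_basis] is in bijection with [BX \ s], which is equipotent to [BX]. *)
Lemma ker_basis_card : infinite_set BX -> (ker_basis #= BX)%card.
Proof.
move=> BXinf; apply: card_eq_trans (card_setD_seq s BXinf).
exact: inj_card_eq projK_inj.
Qed.

End KernelBasis.

Lemma ker_hamel_basis {K : numFieldType} {V : lmodType K} n (phi : 'I_n -> V -> K)
  (BX : set V) :
  (forall i a x y, phi i (a *: x + y) = a * phi i x + phi i y) ->
  hamel_basis [set: V] BX -> infinite_set BX ->
  exists B, hamel_basis [set x | forall i, phi i x = 0] B /\ (B #= BX)%card.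
Proof.
move=> phi_lin BXb BXinf; have [s [sB fs spanP]] := exists_image_basis phi BX.
exists (ker_basis phi BX s); split.
  exact: (ker_basis_hamel phi_lin BXb sB fs spanP).
exact: (ker_basis_card phi_lin BXb sB fs BXinf).
Qed.

Section Functional.
Context {K : numFieldType} {V : lmodType K} (f : V -> K^o) (f_lin : linmap f).

Lemma subspace_reaches_level W x (c : K) :
  lsubspace W -> W x -> f x != 0 -> exists2 w, W w & f w = c.
Proof.
move=> WS Wx fx0; exists ((c / f x) *: x); first exact: subspaceZ.
by rewrite (linmapZ f_lin) [_ *: _]divfK.
Qed.

Lemma bounded_subspace_ker W (eps : K) :
  lsubspace W -> (forall w, W w -> `|f w| < eps) -> forall w, W w -> f w = 0.
Proof.
move=> WS Wbd w Ww; apply/eqP; apply: contraT => fw0.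
have [w' /Wbd] := subspace_reaches_level eps WS Ww fw0.
move=> + fw'; rewrite fw' => lt_eps.
have eps0 := le_lt_trans (normr_ge0 eps) lt_eps.
by move: lt_eps; rewrite gtr0_norm ?ltxx.
Qed.

End Functional.

(* A point of the open slab [|phi i| < eps] on which [phi i0] does not vanish:
   shrink any [y] with [phi i0 y != 0]. *)
Lemma exists_small_point {K : numFieldType} {V : lmodType K} n
    (phi : 'I_n -> V -> K^o) (eps : K) (i0 : 'I_n) (y : V) :
  (forall i, linmap (phi i)) -> 0 < eps -> phi i0 y != 0 ->
  exists x, (forall i, `|phi i x| < eps) /\ phi i0 x != 0.
Proof.
move=> phi_lin eps0 y0; set M := \sum_i `|phi i y|; set t := eps / (M + 1).
have M1 : 0 < M + 1 by rewrite ltr_wpDl // sumr_ge0.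
have t0 : 0 < t by rewrite divr_gt0.
have phiZ i : phi i (t *: y) = t * phi i y by exact: (linmapZ (phi_lin i)).
exists (t *: y); split => [i|]; rewrite phiZ; last first.
  exact: mulf_neq0 (lt0r_neq0 t0) y0.
rewrite normrM (gtr0_norm t0) (@le_lt_trans _ _ (t * M)) //.
  apply: ler_wpM2l; first exact: ltW.
  by rewrite /M (bigD1 i) //= lerDl sumr_ge0.
have -> : eps = t * (M + 1) by rewrite /t divfK // gt_eqF.
by rewrite ltr_pM2l // ltrDl.
Qed.

(* A subspace with a Hamel basis [B] contains subspaces of every dimension
   [|S| <= |B|]: the spans of the images of [S] under injections into [B]. *)
Lemma subspace_of_dim {K : numFieldType} {V : lmodType K} (U B : set V)
    (T : Type) (S : set T) :
  hamel_basis U B -> (S #<= B)%card ->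
  exists W, [/\ lsubspace W, W `<=` U & dim_is W S].
Proof.
pose Vp : pointedType := HB.pack_for pointedType V (isPointed.Build V 0).
move=> [_ [indB spanB]] /(@pcard_leP _ Vp) /injfunPex [g gS ginj].
exists (lspan (g @` S)); split; first exact: lspan_subspace.
  rewrite -spanB; apply: lspan_min (lspan_subspace _) _ => _ [y Sy <-].
  exact/sub_lspan/gS.
exists (g @` S); split; last exact: inj_card_eq ginj.
split; first exact: sub_lspan.
by split => //; apply: lin_indep_sub indB => _ [y Sy <-]; exact: gS.
Qed.

Lemma hamel_basis_infinite {K : numFieldType} {V : lmodType K} (BX : set V) :
  infinite_dim [set: V] -> hamel_basis [set: V] BX -> infinite_set BX.
Proof.
move=> Vinf [_ [_ spanB]] /finite_seqP [s BXs]; apply: Vinf.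
by exists s; rewrite -spanB BXs.
Qed.

Lemma ker_closed {K : numFieldType} {X : normedModType K} n
    (phi : 'I_n -> X -> K^o) :
  (forall i, continuous (phi i)) -> closed [set x | forall i, phi i x = 0].
Proof.
move=> phi_cont.
have -> : [set x | forall i, phi i x = 0] =
    \bigcap_(i in [set: 'I_n]) (phi i @^-1` [set 0]).
  by apply/seteqP; split => x Hx i; [move=> _; exact: Hx | exact: Hx].
apply: closed_bigI => i _; apply: preimage_closed => [x _|]; first exact: phi_cont.
exact/accessible_closed_set1/hausdorff_accessible/norm_hausdorff.
Qed.

Section Slab.
Context {K : numFieldType} {X : normedModType K}.
Variables (n : nat) (phi : 'I_n -> X -> K^o) (eps : K).
Hypothesis eps0 : 0 < eps.
Hypothesis dual : forall i, is_dual (phi i).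

Let A : set X := [set x | forall i, `|phi i x| < eps].
Let Ker : set X := [set x | forall i, phi i x = 0].

Let phi_lin i : linmap (phi i). Proof. exact: (proj1 (dual i)). Qed.

Lemma ker_sub_slab : Ker `<=` A.
Proof. by move=> x Kx i; rewrite Kx normr0. Qed.

Lemma slab_subspace_ker W : lsubspace W -> W `<=` A `|` [set 0] -> W `<=` Ker.
Proof.
move=> WS WA w Ww i; apply: (bounded_subspace_ker (phi_lin i) WS _ Ww).
by move=> v /WA[//|->]; apply: ker_sub_slab => j; rewrite (linmap0 (phi_lin j)).
Qed.

Lemma ker_dim BX :
  infinite_dim [set: X] -> hamel_basis [set: X] BX -> dim_is Ker BX.
Proof.
move=> Xinf BXb.
exact: (ker_hamel_basis phi_lin BXb (hamel_basis_infinite Xinf BXb)).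
Qed.

(* [A] is [(|S|, dim X)]-spaceable for [|S| <= dim X]: [Ker] contains a subspace
   of dimension [|S|], and it is the required closed subspace of dimension
   [dim X] containing any subspace of [A \cup {0}]. *)
Lemma slab_spaceable (T : Type) (S : set T) BX : infinite_dim [set: X] ->
  hamel_basis [set: X] BX -> (S #<= BX)%card -> spaceable A S BX.
Proof.
move=> Xinf BXb SBX; have [B [Bb BBX]] := ker_dim Xinf BXb.
split.
  have SB : (S #<= B)%card.
    by apply: card_le_trans SBX _; move: BBX; rewrite card_eq_le => /andP[].
  have [W [WS WK WS']] := subspace_of_dim Bb SB.
  by exists W; split => //; split => // w /WK/ker_sub_slab; left.
move=> W WS WA _; exists Ker; split; [|split; [|split; [|split]]].
- exact: (ker_subspace phi_lin).
- by apply: ker_closed => i; case: (dual i).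
- by exists B.
- exact: slab_subspace_ker.
- by move=> x /ker_sub_slab; left.
Qed.

(* A point of [A] through which no subspace inside [A \cup {0}] passes: any
   point of [A] outside [Ker]. *)
Lemma slab_bad_point : (0 < n)%N -> (forall i, phi i <> (fun=> 0)) ->
  exists x, A x /\ forall W, lsubspace W -> W x -> ~ (W `<=` A `|` [set 0]).
Proof.
move=> n0 nz; pose i0 : 'I_n := Ordinal n0.
have [y y0] : exists y, phi i0 y != 0.
  apply: contrapT => all0; apply: (nz i0); apply: funext => y.
  by apply: contrapT => /eqP y0; apply: all0; exists y.
have [x [Ax x0]] := exists_small_point phi_lin eps0 y0.
exists x; split => // W WS Wx WA.
by move: x0; rewrite (slab_subspace_ker WS WA Wx i0) eqxx.
Qed.

End Slab.

Theorem thm4_holds (K : numFieldType) (X : completeNormedModType K) : thm4_stmt X.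
Proof.
move=> Xinf eps n phi eps0 n0 dual nz A Ker.
have [x [Ax noW]] := slab_bad_point eps0 dual n0 nz.
split; last first.
  split; first by exists x.
  split; first by move=> /(_ x Ax)[W [WS [_ [Wx WA]]]]; exact: noW WS Wx WA.
  by move=> /(_ x Ax)[W [WS [_ [_ [Wx WA]]]]]; exact: noW WS Wx WA.
split; last first.
  split; last by move=> T S BX BXb SBX _; exact: slab_spaceable.
  by move=> W WS WA _; apply: (slab_subspace_ker eps0 dual WS) => w /WA; left.
have [BX BXb] := @exists_hamel_basis K X.
have [B [Bb BBX]] := ker_dim dual Xinf BXb.
by exists B, BX.
Qed.

Theorem mainTheorem4 (R : realType) :
  (forall X : completeNormedModType R, thm4_stmt X) /\
  (forall X : completeNormedModType R[i], thm4_stmt X).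
Proof. by split => X; exact: thm4_holds. Qed.
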